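(* Assume the standing assumptions and let $f$ satisfy (F); let $g$, $b_g$, $\gamma_g$ be as below. Then the problem $$\partial_t\tilde s=\Delta_h\tilde s+b_g\big[D^+_hg\,D^+_h\tilde s+D^-_hg\,D^-_h\tilde s\big]+\gamma_g\,\tilde s\,(Bf-1)\ \text{ on }(0,T]\times\Omega_h^+,$$ $$\tilde s(0,x)=s_0(x)\ (x\in\Omega_h^+),\qquad \tilde s(t,0)=\psi(t)\ (t\in[0,T]),$$ has a unique bounded solution $\tilde s$, and $0\le\tilde s(t,x)\le\eta$ for all $(t,x)\in[0,T]\times\Omega_h^+$.
   Context: Discrete setting: $h>0$, $\Omega_h^+=\{h,2h,\dots\}$, $\Omega_{h,0}^+=\Omega_h^+\cup\{0\}$, $\|f\|_{L^p(\Omega_h^+)}=(h\sum_{z\in\Omega_h^+}|f(z)|^p)^{1/p}$, $D^+_hf(x)=\frac{f(x+h)-f(x)}{h}$, $D^-_hf(x)=\frac{f(x)-f(x-h)}{h}$, $\Delta_hf(x)=\frac{f(x+h)-2f(x)+f(x-h)}{h^2}$. Standing assumptions: $A=1$, $B\in\{-1,1\}$, $\varphi(c)=A+Bc$, $\lambda>0$, $T>0$, $\eta>0$; $\psi\in C^\beta([0,T])$ for some $\beta\in(1/4,1/2)$ with $0\le\psi\le\eta$, $\psi(0)=0$; $s_0:\Omega_{h,0}^+\to\mathbb{R}$ with $0\le s_0\le\eta$, $s_0(0)=0$, $s_0,D^+_hs_0\in L^2(\Omega_h^+)$; $c_0:\Omega_{h,0}^+\to\mathbb{R}$ with $0<c_m\le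 c_0\le C_0$ and $C_0-c_0,\ D^+_hc_0\in L^2(\Omega_h^+)$; there are constants $0<\varphi_{\min}\le\varphi_{\max}$ with $\varphi_{\min}\le\varphi(c)\le\varphi_{\max}$ for all $c\in[0,C_0]$; if $B=1$ then $\eta<1$. Conditions (F) on a Borel $f:[0,T]\times\Omega_{h,0}^+\to\mathbb{R}$, for some $K>0$: $f\in C([0,T],L^2(\Omega_h^+))$, $\sup_t\|f(t)\|^2_{L^2}+\int_0^T\|D^+_hf(t)\|^2_{L^2}dt\le K$, $f\ge0$, $f(t,0)=\psi(t)$, $0\le f\le\eta$. Linearized coefficients: $g(t,x)=Ac_0(x)[\varphi(c_0(x))e^{\lambda A\int_0^tf(\tau,x)d\tau}-Bc_0(x)]^{-1}$, $b_g=\frac{B}{2(A+Bg)}$, $\gamma_g=\lambda g$. *)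

From Stdlib Require Import Reals Lra.
From Coquelicot Require Import Coquelicot.
Open Scope R_scope.

(* Grid functions on Omega_{h,0}^+ = {0, h, 2h, ...} are encoded as u : nat -> R,
   u k standing for u(k h).  Omega_h^+ corresponds to k >= 1. *)

Definition inL2 (u : nat -> R) : Prop := ex_series (fun k => (u (S k)) ^ 2).

Definition L2norm (h : R) (u : nat -> R) : R := sqrt (h * Series (fun k => (u (S k)) ^ 2)).

Definition Dp (h : R) (u : nat -> R) (k : nat) : R := (u (S k) - u k) / h.
Definition Dm (h : R) (u : nat -> R) (k : nat) : R := (u k - u (pred k)) / h.
Definition Lap (h : R) (u : nat -> R) (k : nat) : R :=
  (u (S k) - 2 * u k + u (pred k)) / (h ^ 2).

Definition contL2 (h T : R) (f : R -> nat -> R) : Prop :=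
  (forall t, 0 <= t <= T -> inL2 (f t)) /\
  forall t0, 0 <= t0 <= T -> forall eps, 0 < eps -> exists delta, 0 < delta /\
    forall t, 0 <= t <= T -> Rabs (t - t0) < delta ->
      L2norm h (fun k => f t k - f t0 k) < eps.

Definition condF (h T eta : R) (psi : R -> R) (K : R) (f : R -> nat -> R) : Prop :=
  0 < K /\
  contL2 h T f /\
  (forall t, 0 <= t <= T -> inL2 (Dp h (f t))) /\
  ex_RInt (fun t => (L2norm h (Dp h (f t))) ^ 2) 0 T /\
  (forall t, 0 <= t <= T ->
     (L2norm h (f t)) ^ 2 + RInt (fun t => (L2norm h (Dp h (f t))) ^ 2) 0 T <= K) /\
  (forall t k, 0 <= t <= T -> 0 <= f t k) /\
  (forall t, 0 <= t <= T -> f t 0%nat = psi t) /\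
  (forall t k, 0 <= t <= T -> 0 <= f t k <= eta).

Definition phi (A B c : R) : R := A + B * c.

Definition holder (T beta : R) (psi : R -> R) : Prop :=
  exists L, 0 <= L /\ forall t s, 0 <= t <= T -> 0 <= s <= T -> t <> s ->
    Rabs (psi t - psi s) <= L * Rpower (Rabs (t - s)) beta.

Definition gco (A B lam : R) (c0 : nat -> R) (f : R -> nat -> R) (t : R) (k : nat) : R :=
  A * c0 k / (phi A B (c0 k) * exp (lam * A * RInt (fun tau => f tau k) 0 t) - B * c0 k).
Definition bco (A B lam : R) (c0 : nat -> R) (f : R -> nat -> R) (t : R) (k : nat) : R :=
  B / (2 * (A + B * gco A B lam c0 f t k)).
Definition gammaco (A B lam : R) (c0 : nat -> R) (f : R -> nat -> R) (t : R) (k : nat) : R :=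
  lam * gco A B lam c0 f t k.

Definition rhs (h A B lam : R) (c0 : nat -> R) (f : R -> nat -> R)
    (s : R -> nat -> R) (t : R) (k : nat) : R :=
  Lap h (s t) k
  + bco A B lam c0 f t k *
      (Dp h (gco A B lam c0 f t) k * Dp h (s t) k
       + Dm h (gco A B lam c0 f t) k * Dm h (s t) k)
  + gammaco A B lam c0 f t k * s t k * (B * f t k - 1).

Definition left_deriv (u : R -> R) (t l : R) : Prop :=
  filterlim (fun tau => (u tau - u t) / (tau - t)) (at_left t) (locally l).

Definition is_solution (h T A B lam : R) (psi : R -> R) (s0 c0 : nat -> R)
    (f s : R -> nat -> R) : Prop :=
  (forall k, (1 <= k)%nat ->
     forall t0, 0 <= t0 <= T -> forall eps, 0 < eps -> exists delta, 0 < delta /\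
       forall t, 0 <= t <= T -> Rabs (t - t0) < delta -> Rabs (s t k - s t0 k) < eps) /\
  (forall k, (1 <= k)%nat -> forall t, 0 < t < T ->
     is_derive (fun tau => s tau k) t (rhs h A B lam c0 f s t k)) /\
  (forall k, (1 <= k)%nat -> left_deriv (fun tau => s tau k) T (rhs h A B lam c0 f s T k)) /\
  (forall k, (1 <= k)%nat -> s 0 k = s0 k) /\
  (forall t, 0 <= t <= T -> s t 0%nat = psi t).

Definition bounded_on (T : R) (s : R -> nat -> R) : Prop :=
  exists M, forall t k, 0 <= t <= T -> Rabs (s t k) <= M.

From Stdlib Require Import Reals Lra Lia.
From Coquelicot Require Import Coquelicot.
Open Scope R_scope.

(* Node by node the equation is a linear system of ODEs
     s_k' = a_k s_(k+1) + c_k s_(k-1) + d_k s_k   (k >= 1),   s_0 = psi,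
   with bounded continuous coefficients.  Expanding the difference operators gives
   a_k, c_k >= 0 (this uses 0 <= g <= C0, and g <= 1 - phi_min when B = -1) and
   a_k + c_k + d_k = gamma_g (B f - 1) <= 0 (this uses f <= eta < 1 when B = 1).
   For u = exp (M t) s all coefficients become nonnegative with sum at most M, so the
   Picard iterates for u stay between 0 and eta exp (M t): this gives the bounds.  In
   the sup norm weighted by exp (- (8 M + 2) t) consecutive iterates get twice closer,
   which gives convergence, and the same estimate applied to the difference of two
   bounded solutions gives uniqueness. *)

(* Data given on [0, T] are extended constantly outside it, so that they are
   continuous on the whole line, as the integration lemmas of Coquelicot require. *)
Definition clamp (T t : R) : R := Rmax 0 (Rmin T t).

Lemma clamp_in T t : 0 <= T -> 0 <= clamp T t <= T.
Proof. unfold clamp, Rmax, Rmin; repeat destruct Rle_dec; lra. Qed.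

Lemma clamp_id T t : 0 <= t <= T -> clamp T t = t.
Proof. unfold clamp, Rmax, Rmin; repeat destruct Rle_dec; lra. Qed.

Lemma clamp_lipschitz T x y : 0 <= T -> Rabs (clamp T x - clamp T y) <= Rabs (x - y).
Proof.
  unfold clamp, Rmax, Rmin, Rabs; repeat destruct Rle_dec; repeat destruct Rcase_abs; lra.
Qed.

Lemma clamp_locally_id T x : 0 < x < T -> locally x (fun y => clamp T y = y).
Proof.
  intros Hx. assert (Hr : 0 < Rmin x (T - x)) by (apply Rmin_pos; lra).
  exists (mkposreal _ Hr). intros y Hy. change (Rabs (y - x) < Rmin x (T - x)) in Hy.
  apply clamp_id. apply Rabs_lt_between in Hy.
  pose proof (Rmin_l x (T - x)). pose proof (Rmin_r x (T - x)). lra.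
Qed.

Lemma continuous_of_eps_delta (f : R -> R) x :
  (forall eps, 0 < eps -> exists d, 0 < d /\
     forall y, Rabs (y - x) < d -> Rabs (f y - f x) < eps) ->
  continuous f x.
Proof.
  intros H. apply filterlim_locally. intros eps.
  destruct (H eps (cond_pos eps)) as [d [Hd Hy]].
  exists (mkposreal d Hd). intros y Hb. exact (Hy y Hb).
Qed.

Lemma continuous_eps_delta (f : R -> R) x : continuous f x ->
  forall eps, 0 < eps -> exists d, 0 < d /\
    forall y, Rabs (y - x) < d -> Rabs (f y - f x) < eps.
Proof.
  intros H eps He. apply filterlim_locally with (eps := mkposreal eps He) in H.
  destruct H as [d Hd]. exists d. split; [apply cond_pos|]. intros y Hy. exact (Hd y Hy).
Qed.

(* Forms of Coquelicot's lemmas that [apply] can unify with [Rplus], [Rminus], [Rmult]. *)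
Lemma continuous_Rplus (f g : R -> R) x :
  continuous f x -> continuous g x -> continuous (fun y => f y + g y) x.
Proof. apply (continuous_plus f g). Qed.

Lemma continuous_Rminus (f g : R -> R) x :
  continuous f x -> continuous g x -> continuous (fun y => f y - g y) x.
Proof. apply (continuous_minus f g). Qed.

Lemma continuous_Rmult (f g : R -> R) x :
  continuous f x -> continuous g x -> continuous (fun y => f y * g y) x.
Proof. apply (continuous_mult f g). Qed.

Lemma continuous_clamp T x : 0 <= T -> continuous (clamp T) x.
Proof.
  intros HT. apply continuous_of_eps_delta. intros e He. exists e. split; [exact He|].
  intros y Hy. eapply Rle_lt_trans; [apply clamp_lipschitz|]; assumption.
Qed.

Lemma continuous_comp_clamp (g : R -> R) T x :
  0 <= T -> (forall y, continuous g y) -> continuous (fun t => g (clamp T t)) x.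
Proof. intros HT Hg. apply (continuous_comp (clamp T) g); auto using continuous_clamp. Qed.

Lemma continuous_of_is_derive (f : R -> R) x l : is_derive f x l -> continuous f x.
Proof.
  intros Hd. apply (ex_derive_continuous (K:=R_AbsRing) (V:=R_NormedModule)). now exists l.
Qed.

Lemma ex_RInt_of_continuous (F : R -> R) a b : (forall x, continuous F x) -> ex_RInt F a b.
Proof. intros HF. apply (ex_RInt_continuous (V:=R_CompleteNormedModule)). auto. Qed.

Lemma is_derive_RInt_0 (F : R -> R) t :
  (forall x, continuous F x) -> is_derive (fun t => RInt F 0 t) t (F t).
Proof.
  intros HF. apply (is_derive_RInt F (fun t => RInt F 0 t) 0 t); [|auto].
  apply filter_forall. intros b. apply (RInt_correct (V:=R_CompleteNormedModule)).
  now apply ex_RInt_of_continuous.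
Qed.

Lemma continuous_RInt_0 (F : R -> R) t :
  (forall x, continuous F x) -> continuous (fun t => RInt F 0 t) t.
Proof. intros HF. eapply continuous_of_is_derive. now apply is_derive_RInt_0. Qed.

Lemma exp_ge_1 x : 0 <= x -> 1 <= exp x.
Proof. intros Hx. pose proof (exp_ineq1_le x). lra. Qed.

Lemma exp_le x y : x <= y -> exp x <= exp y.
Proof. intros [H|<-]; [left; now apply exp_increasing|lra]. Qed.

Lemma left_deriv_of_is_derive (f : R -> R) x l : is_derive f x l -> left_deriv f x l.
Proof.
  intros Hd. apply is_derive_Reals in Hd. apply filterlim_locally. intros eps.
  destruct (Hd eps (cond_pos eps)) as [del Hdel].
  exists del. intros y Hy Hyx. change (Rabs (y - x) < del) in Hy.
  change (Rabs ((f y - f x) / (y - x) - l) < eps).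
  specialize (Hdel (y - x) ltac:(lra) Hy).
  now replace (x + (y - x)) with (y : R) in Hdel by (simpl; lra).
Qed.

(* [MVT_gen] applied to [±v - w]; the derivative is truncated at [0] because
   [MVT_gen] may pick an endpoint, where no derivative is assumed. *)
Lemma abs_sub_le_of_derive_le (v dv w dw : R -> R) a b : a <= b ->
  (forall x, a <= x <= b -> continuous v x /\ continuous w x) ->
  (forall x, a < x < b -> is_derive v x (dv x) /\ is_derive w x (dw x) /\ Rabs (dv x) <= dw x) ->
  Rabs (v b - v a) <= w b - w a.
Proof.
  intros Hab Hc Hd.
  assert (Hsg : forall sg, sg = 1 \/ sg = -1 -> sg * v b - w b <= sg * v a - w a).
  { intros sg Hsg.
    set (dg := fun x => Rmin 0 (sg * dv x - dw x)).
    destruct (MVT_gen (fun x => sg * v x - w x) a b dg) as [y [_ Hy]].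
    - intros x Hx. rewrite Rmin_left, Rmax_right in Hx by lra.
      destruct (Hd x Hx) as (Hv & Hw & Hle).
      unfold dg. rewrite Rmin_right.
      + apply (is_derive_minus (fun x => sg * v x) w); [apply (is_derive_scal v)|]; assumption.
      + apply Rabs_le_between in Hle. destruct Hsg; subst sg; lra.
    - intros x Hx. rewrite Rmin_left, Rmax_right in Hx by lra.
      destruct (Hc x Hx) as [Hv Hw]. apply continuity_pt_filterlim.
      apply (continuous_minus (fun x => sg * v x) w); [apply (continuous_scal_r sg v)|]; assumption.
    - assert (dg y <= 0) by apply Rmin_l.
      assert (dg y * (b - a) <= 0) by (apply Rmult_le_0_r; lra). lra. }
  pose proof (Hsg 1 (or_introl eq_refl)). pose proof (Hsg (-1) (or_intror eq_refl)).
  apply Rabs_le_between. lra.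
Qed.

Lemma abs_le_exp_of_derive (v dv : R -> R) T r C : 0 <= C ->
  (forall x, continuous v x) -> v 0 = 0 ->
  (forall x, 0 < x < T -> is_derive v x (dv x) /\ Rabs (dv x) <= C * r * exp (r * x)) ->
  forall t, 0 <= t <= T -> Rabs (v t) <= C * exp (r * t).
Proof.
  intros HC Hc H0 Hd t Ht.
  assert (Hw : forall x, is_derive (fun y => C * exp (r * y)) x (C * r * exp (r * x))).
  { intros x. auto_derive; [auto|ring]. }
  pose proof (abs_sub_le_of_derive_le v dv (fun y => C * exp (r * y))
    (fun x => C * r * exp (r * x)) 0 t ltac:(lra)) as Hmvi.
  rewrite H0, Rminus_0_r, Rmult_0_r, exp_0 in Hmvi.
  assert (Rabs (v t) <= C * exp (r * t) - C * 1).
  { apply Hmvi.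
    - intros x _. split; [auto|]. eapply continuous_of_is_derive. apply Hw.
    - intros x Hx. destruct (Hd x ltac:(lra)) as [Hv Hb]. auto. }
  lra.
Qed.

Lemma halving_lt C e : 0 <= C -> 0 < e -> exists N, C * (/2) ^ N < e.
Proof.
  intros HC He.
  destruct (pow_lt_1_zero (/2) ltac:(rewrite Rabs_right; lra) (e / (C + 1))
    ltac:(apply Rdiv_lt_0_compat; lra)) as [N HN].
  exists N. specialize (HN N (le_n _)).
  assert (Hp : 0 < (/2) ^ N) by (apply pow_lt; lra).
  rewrite Rabs_right in HN by lra.
  apply (Rmult_lt_compat_l (C + 1)) in HN; [|lra].
  replace ((C + 1) * (e / (C + 1))) with e in HN by (field; lra). nra.
Qed.

Lemma eq0_of_abs_le_halving X C : 0 <= C -> (forall n, Rabs X <= C * (/2) ^ n) -> X = 0.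
Proof.
  intros HC HX. destruct (Req_dec X 0) as [|Hne]; [assumption|exfalso].
  destruct (halving_lt C (Rabs X) HC (Rabs_pos_lt X Hne)) as [N HN].
  specialize (HX N). lra.
Qed.

Section HalvingSequence.
Variables (x : nat -> R) (C : R).
Hypothesis Hstep : forall n, Rabs (x (S n) - x n) <= C * (/2) ^ n.

Lemma halving_const_nonneg : 0 <= C.
Proof. pose proof (Hstep 0). pose proof (Rabs_pos (x 1%nat - x 0%nat)). simpl in *. lra. Qed.

Lemma halving_cauchy m n : Rabs (x (m + n) - x n) <= 2 * C * ((/2) ^ n - (/2) ^ (m + n)).
Proof.
  induction m.
  - simpl. rewrite Rminus_diag, Rabs_R0. lra.
  - pose proof (Hstep (m + n)) as Hs. change (S m + n)%nat with (S (m + n)). simpl pow at 2.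
    pose proof (Rabs_triang (x (S (m + n)) - x (m + n)) (x (m + n) - x n)) as Ht.
    replace (x (S (m + n)) - x (m + n) + (x (m + n) - x n)) with (x (S (m + n)) - x n) in Ht
      by ring.
    lra.
Qed.

Lemma halving_cauchy_le m n : Rabs (x (m + n) - x n) <= 2 * C * (/2) ^ n.
Proof.
  pose proof (halving_cauchy m n). pose proof (pow_lt (/2) (m + n) ltac:(lra)).
  pose proof halving_const_nonneg. nra.
Qed.

Lemma halving_is_lim : is_lim_seq x (real (Lim_seq x)).
Proof.
  pose proof halving_const_nonneg.
  assert (Hex : ex_finite_lim_seq x).
  { apply ex_lim_seq_cauchy_corr. intros eps.
    destruct (halving_lt (4 * C) eps ltac:(lra) (cond_pos eps)) as [N HN].
    exists N. intros n m Hn Hm.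
    pose proof (halving_cauchy_le (n - N) N) as H1.
    pose proof (halving_cauchy_le (m - N) N) as H2.
    replace (n - N + N)%nat with n in H1 by lia. replace (m - N + N)%nat with m in H2 by lia.
    rewrite Rabs_minus_sym in H2.
    pose proof (Rabs_triang (x n - x N) (x N - x m)) as Ht.
    replace (x n - x N + (x N - x m)) with (x n - x m) in Ht by ring. lra. }
  destruct Hex as [l Hl]. now rewrite (is_lim_seq_unique _ _ Hl).
Qed.

Lemma halving_lim_near n : Rabs (real (Lim_seq x) - x n) <= 2 * C * (/2) ^ n.
Proof.
  set (l := real (Lim_seq x)).
  assert (Hlim : is_lim_seq (fun m => Rabs (x (m + n) - x n)) (Rabs (l - x n))).
  { apply (is_lim_seq_abs _ (l - x n)).
    apply is_lim_seq_minus'; [|apply is_lim_seq_const].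
    apply (is_lim_seq_incr_n x n). apply halving_is_lim. }
  apply (is_lim_seq_le _ _ _ _ (fun m => halving_cauchy_le m n) Hlim (is_lim_seq_const _)).
Qed.

End HalvingSequence.

Lemma continuous_halving_limit (g : nat -> R -> R) (G : R -> R) C x : 0 <= C ->
  (forall n y, Rabs (G y - g n y) <= C * (/2) ^ n) -> (forall n, continuous (g n) x) ->
  continuous G x.
Proof.
  intros HC Hnear Hg. apply continuous_of_eps_delta. intros e He.
  destruct (halving_lt C (e / 3) HC ltac:(lra)) as [N HN].
  destruct (continuous_eps_delta (g N) x (Hg N) (e / 3) ltac:(lra)) as [del [Hdel Hy]].
  exists del. split; [exact Hdel|]. intros y Hyx. specialize (Hy y Hyx).
  pose proof (Hnear N y) as Ey. pose proof (Hnear N x) as Ex.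
  apply Rabs_lt_between in Hy. apply Rabs_le_between in Ey. apply Rabs_le_between in Ex.
  apply Rabs_lt_between. lra.
Qed.

Lemma holder_continuous_clamp T beta (psi : R -> R) : 0 <= T -> 0 < beta ->
  holder T beta psi -> forall x, continuous (fun t => psi (clamp T t)) x.
Proof.
  intros HT Hbeta [L [HL Hh]] x. apply continuous_of_eps_delta. intros e He.
  set (del := exp (ln (e / (L + 1)) / beta)).
  exists del. split; [apply exp_pos|]. intros y Hy.
  set (z := Rabs (clamp T y - clamp T x)).
  destruct (Req_dec (clamp T y) (clamp T x)) as [Heq|Hne].
  { rewrite Heq, Rminus_diag, Rabs_R0. exact He. }
  eapply Rle_lt_trans; [apply Hh; auto using clamp_in|]. fold z.
  assert (Hz : 0 < z) by now apply Rabs_pos_lt, Rminus_eq_contra.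
  assert (Hzd : z < del) by (eapply Rle_lt_trans; [apply clamp_lipschitz|]; assumption).
  assert (Hpow : Rpower z beta < e / (L + 1)).
  { unfold Rpower. rewrite <- (exp_ln (e / (L + 1))) by (apply Rdiv_lt_0_compat; lra).
    apply exp_increasing. apply ln_increasing in Hzd; [|exact Hz].
    unfold del in Hzd. rewrite ln_exp in Hzd.
    apply (Rmult_lt_compat_l beta) in Hzd; [|exact Hbeta].
    replace (beta * (ln (e / (L + 1)) / beta)) with (ln (e / (L + 1))) in Hzd by (field; lra).
    lra. }
  assert (0 <= Rpower z beta) by (left; apply exp_pos).
  assert (L * Rpower z beta <= L * (e / (L + 1))) by (apply Rmult_le_compat_l; lra).
  assert (L * (e / (L + 1)) < e).
  { apply (Rmult_lt_reg_r (L + 1)); [lra|].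
    replace (L * (e / (L + 1)) * (L + 1)) with (L * e) by (field; lra). nra. }
  lra.
Qed.

Lemma term_le_Series (u : nat -> R) j : (forall n, 0 <= u n) -> ex_series u -> u j <= Series u.
Proof.
  intros Hp Hex. apply Series_correct in Hex.
  assert (Hs : sum_n u j <= Series u).
  { apply (is_lim_seq_incr_compare (sum_n u)); [exact Hex|].
    intros n. rewrite sum_Sn. pose proof (Hp (S n)).
    change (sum_n u n <= sum_n u n + u (S n)). lra. }
  assert (u j <= sum_n u j).
  { rewrite sum_n_Reals. destruct j; simpl; [lra|].
    pose proof (cond_pos_sum u j Hp). lra. }
  lra.
Qed.

Lemma inL2_minus (u v : nat -> R) : inL2 u -> inL2 v -> inL2 (fun k => u k - v k).
Proof.
  intros [lu Hu] [lv Hv].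
  apply (ex_series_le (K:=R_AbsRing) (V:=R_CompleteNormedModule) _
    (fun j => 2 * u (S j) ^ 2 + 2 * v (S j) ^ 2)).
  - intros n. change (Rabs ((u (S n) - v (S n)) ^ 2) <= 2 * u (S n) ^ 2 + 2 * v (S n) ^ 2).
    rewrite Rabs_right by (apply Rle_ge, pow2_ge_0).
    pose proof (pow2_ge_0 (u (S n) + v (S n))). nra.
  - apply (ex_series_plus (K:=R_AbsRing) (V:=R_NormedModule));
      apply (ex_series_scal (K:=R_AbsRing) (V:=R_NormedModule) 2); eexists; eassumption.
Qed.

Lemma abs_entry_le_L2norm h (u : nat -> R) k : 0 < h -> inL2 u -> (1 <= k)%nat ->
  sqrt h * Rabs (u k) <= L2norm h u.
Proof.
  intros Hh Hu Hk. unfold L2norm.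
  pose proof (term_le_Series (fun j => u (S j) ^ 2) (pred k) (fun n => pow2_ge_0 _) Hu) as Ht.
  cbv beta in Ht. replace (S (pred k)) with k in Ht by lia.
  rewrite <- sqrt_Rsqr_abs, <- sqrt_mult_alt by lra.
  apply sqrt_le_1_alt, Rmult_le_compat_l; [lra|].
  unfold Rsqr. now replace (u k * u k) with (u k ^ 2) by ring.
Qed.

Lemma contL2_continuous_entry h T (f : R -> nat -> R) k : 0 < h -> 0 <= T ->
  contL2 h T f -> (1 <= k)%nat -> forall x, continuous (fun t => f (clamp T t) k) x.
Proof.
  intros Hh HT [Hin Hc] Hk x. apply continuous_of_eps_delta. intros e He.
  assert (Hsh : 0 < sqrt h) by now apply sqrt_lt_R0.
  destruct (Hc (clamp T x) (clamp_in T x HT) (e * sqrt h) ltac:(nra)) as [del [Hdel Hy]].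
  exists del. split; [exact Hdel|]. intros y Hyx.
  specialize (Hy (clamp T y) (clamp_in T y HT)
    ltac:(eapply Rle_lt_trans; [apply clamp_lipschitz|]; assumption)).
  pose proof (abs_entry_le_L2norm h (fun j => f (clamp T y) j - f (clamp T x) j) k Hh
    (inL2_minus _ _ (Hin _ (clamp_in T y HT)) (Hin _ (clamp_in T x HT))) Hk).
  apply (Rmult_lt_reg_l (sqrt h)); [exact Hsh|]. simpl in *. lra.
Qed.

Lemma is_derive_plus_RInt_0 (c : R) (F : R -> R) t :
  (forall x, continuous F x) -> is_derive (fun t => c + RInt F 0 t) t (F t).
Proof.
  intros HF. rewrite <- (Rplus_0_l (F t)).
  apply (is_derive_plus (fun _ => c) (fun t => RInt F 0 t));
    [apply (is_derive_const (K:=R_AbsRing) (V:=R_NormedModule))|now apply is_derive_RInt_0].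
Qed.

Lemma RInt_scaled_exp (E r t : R) : RInt (fun x => E * r * exp (r * x)) 0 t = E * exp (r * t) - E.
Proof.
  apply (is_RInt_unique (V:=R_CompleteNormedModule)).
  replace (E * exp (r * t) - E) with (minus (E * exp (r * t)) (E * exp (r * 0)))
    by (rewrite Rmult_0_r, exp_0; unfold minus, plus, opp; simpl; ring).
  apply (is_RInt_derive (fun x => E * exp (r * x))).
  - intros x _. auto_derive; [auto|ring].
  - intros x _. apply (continuous_of_is_derive _ _ (E * r * (r * exp (r * x)))).
    auto_derive; [auto|ring].
Qed.

(** * Infinite linear systems of ODEs *)

Section LinearSystem.
Variables (T eta M : R) (a c d : nat -> R -> R) (p : R -> R) (s0 : nat -> R).
Hypothesis HT : 0 <= T.
Hypothesis HM : 0 <= M.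
Hypothesis Ha : forall k t, (1 <= k)%nat -> 0 <= a k t <= M.
Hypothesis Hc : forall k t, (1 <= k)%nat -> 0 <= c k t <= M.
Hypothesis Hd : forall k t, (1 <= k)%nat -> Rabs (d k t) <= M.

Definition sysop (u : R -> nat -> R) (t : R) (k : nat) : R :=
  a k t * u t (S k) + c k t * u t (pred k) + d k t * u t k.

Lemma sysop_abs_le u t k Q : (1 <= k)%nat -> (forall j, Rabs (u t j) <= Q) ->
  Rabs (sysop u t k) <= 3 * M * Q.
Proof.
  intros Hk HQ.
  assert (Hterm : forall e j, Rabs e <= M -> Rabs (e * u t j) <= M * Q).
  { intros e j He. rewrite Rabs_mult. apply Rmult_le_compat; auto using Rabs_pos. }
  destruct (Ha k t Hk), (Hc k t Hk).
  pose proof (Hterm (a k t) (S k) ltac:(rewrite Rabs_right; lra)).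
  pose proof (Hterm (c k t) (pred k) ltac:(rewrite Rabs_right; lra)).
  pose proof (Hterm (d k t) k (Hd k t Hk)).
  unfold sysop. eapply Rle_trans; [apply Rabs_triang|].
  eapply Rle_trans; [apply Rplus_le_compat_r, Rabs_triang|]. lra.
Qed.

Let rate := 8 * M + 2.

(* Bielecki's weight: if the right-hand side is at most [4 M C 2^-n exp (rate x)],
   the solution is at most [C 2^-(n+1) exp (rate t)] because [rate / 2 = 4 M + 1]. *)
Lemma halving_step (v dv : R -> R) C n : 0 <= C ->
  (forall x, continuous v x) -> v 0 = 0 ->
  (forall x, 0 < x < T -> is_derive v x (dv x) /\
     Rabs (dv x) <= 4 * M * (C * (/2) ^ n * exp (rate * x))) ->
  forall t, 0 <= t <= T -> Rabs (v t) <= C * (/2) ^ S n * exp (rate * t).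
Proof.
  intros HC Hv H0 Hd'. apply (abs_le_exp_of_derive v dv T rate); auto.
  - pose proof (pow_lt (/2) (S n) ltac:(lra)). nra.
  - intros x Hx. destruct (Hd' x Hx) as [Hder Hb]. split; [exact Hder|].
    eapply Rle_trans; [exact Hb|].
    assert (0 <= C * (/2) ^ n * exp (rate * x)).
    { pose proof (pow_lt (/2) n ltac:(lra)). pose proof (exp_pos (rate * x)).
      apply Rmult_le_pos; [apply Rmult_le_pos|]; lra. }
    replace (C * (/2) ^ S n * rate * exp (rate * x))
      with ((4 * M + 1) * (C * (/2) ^ n * exp (rate * x))) by (unfold rate; simpl; field).
    nra.
Qed.

Lemma system_unique (w : R -> nat -> R) :
  (forall t, 0 <= t <= T -> w t 0%nat = 0) ->
  (forall k, (1 <= k)%nat -> w 0 k = 0) ->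
  (forall k t, (1 <= k)%nat -> 0 < t < T -> is_derive (fun x => w x k) t (sysop w t k)) ->
  (forall k x, (1 <= k)%nat -> continuous (fun t => w (clamp T t) k) x) ->
  (exists Bw, forall t k, 0 <= t <= T -> Rabs (w t k) <= Bw) ->
  forall t k, 0 <= t <= T -> w t k = 0.
Proof.
  intros Hw0 Hinit Hder Hcont [Bw HBw].
  set (B0 := Rmax Bw 0). assert (HB0 : 0 <= B0) by apply Rmax_r.
  assert (Hhalf : forall n t k, 0 <= t <= T ->
            Rabs (w t k) <= B0 * (/2) ^ n * exp (rate * t)).
  { induction n as [|n IHn]; intros t k Ht.
    - assert (Bw <= B0) by apply Rmax_l.
      assert (1 <= exp (rate * t)) by (apply exp_ge_1; unfold rate; nra).
      pose proof (HBw t k Ht). simpl. nra.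
    - destruct k as [|k].
      { rewrite Hw0, Rabs_R0 by exact Ht. pose proof (pow_lt (/2) (S n) ltac:(lra)).
        pose proof (exp_pos (rate * t)). apply Rmult_le_pos; [|lra]. nra. }
      rewrite <- (clamp_id T t Ht) at 1.
      apply (halving_step (fun x => w (clamp T x) (S k)) (fun x => sysop w x (S k)) B0 n HB0);
        [| | |exact Ht].
      + intros x. apply Hcont. lia.
      + rewrite clamp_id by lra. apply Hinit. lia.
      + intros x Hx. split.
        * apply (is_derive_ext_loc (fun y => w y (S k))); [|apply Hder; [lia|exact Hx]].
          apply (filter_imp (fun y => clamp T y = y)); [|now apply clamp_locally_id].
          intros y ->. reflexivity.
        * assert (HQ : 0 <= B0 * (/2) ^ n * exp (rate * x)).
          { eapply Rle_trans; [apply Rabs_pos|apply (IHn x 0%nat); lra]. }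
          eapply Rle_trans; [apply sysop_abs_le; [lia|]|].
          { intros j. apply IHn. lra. }
          nra. }
  intros t k Ht.
  apply (eq0_of_abs_le_halving _ (B0 * exp (rate * t))).
  - pose proof (exp_pos (rate * t)). nra.
  - intros n. rewrite Rmult_assoc, (Rmult_comm (exp _)), <- Rmult_assoc. now apply Hhalf.
Qed.

Hypothesis Heta : 0 <= eta.
Hypothesis Hsum : forall k t, (1 <= k)%nat -> a k t + c k t + d k t <= 0.
Hypothesis Hcoef_cont : forall k t, (1 <= k)%nat ->
  continuous (a k) t /\ continuous (c k) t /\ continuous (d k) t.
Hypothesis Hp_cont : forall t, continuous p t.
Hypothesis Hp_bd : forall t, 0 <= p t <= eta.
Hypothesis Hs0 : forall k, (1 <= k)%nat -> 0 <= s0 k <= eta.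

(* The system satisfied by [u = exp (M t) s]; all its coefficients are
   nonnegative and sum to at most [M], so it preserves [0 <= u <= eta exp (M t)]. *)
Definition shifted (u : R -> nat -> R) (t : R) (k : nat) : R := sysop u t k + M * u t k.

Lemma shifted_bounds u t k E : (1 <= k)%nat -> (forall j, 0 <= u t j <= E) ->
  0 <= shifted u t k <= M * E.
Proof.
  intros Hk Hu. destruct (Ha k t Hk), (Hc k t Hk).
  pose proof (Hd k t Hk) as Hdk. apply Rabs_le_between in Hdk. pose proof (Hsum k t Hk).
  destruct (Hu (S k)), (Hu (pred k)), (Hu k).
  assert (0 <= a k t * u t (S k) <= a k t * E) by (split; nra).
  assert (0 <= c k t * u t (pred k) <= c k t * E) by (split; nra).
  assert (0 <= (d k t + M) * u t k <= (d k t + M) * E) by (split; nra).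
  unfold shifted, sysop. nra.
Qed.

Lemma shifted_lipschitz u v t k Q : (1 <= k)%nat -> (forall j, Rabs (u t j - v t j) <= Q) ->
  Rabs (shifted u t k - shifted v t k) <= 4 * M * Q.
Proof.
  intros Hk HQ.
  replace (shifted u t k - shifted v t k)
    with (sysop (fun t j => u t j - v t j) t k + M * (u t k - v t k))
    by (unfold shifted, sysop; ring).
  pose proof (sysop_abs_le (fun t j => u t j - v t j) t k Q Hk HQ).
  assert (Rabs (M * (u t k - v t k)) <= M * Q)
    by (rewrite Rabs_mult, Rabs_right by lra; apply Rmult_le_compat_l; auto).
  pose proof (Rabs_triang (sysop (fun t j => u t j - v t j) t k) (M * (u t k - v t k))). lra.
Qed.

Lemma continuous_shifted u k x : (1 <= k)%nat ->
  (forall j y, continuous (fun t => u (clamp T t) j) y) ->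
  continuous (fun t => shifted u (clamp T t) k) x.
Proof.
  intros Hk Hu. unfold shifted, sysop.
  repeat apply continuous_Rplus; apply continuous_Rmult; auto using continuous_const.
  all: apply (continuous_comp_clamp _ T x HT); intros y; apply Hcoef_cont; exact Hk.
Qed.

Fixpoint picard (n : nat) : R -> nat -> R := fun t k =>
  match k with
  | O => exp (M * t) * p t
  | S _ =>
      match n with
      | O => s0 k
      | S m => s0 k + RInt (fun x => shifted (picard m) (clamp T x) k) 0 t
      end
  end.

Lemma continuous_exp_boundary x : continuous (fun t => exp (M * t) * p t) x.
Proof.
  apply continuous_Rmult; [|apply Hp_cont].
  apply (continuous_of_is_derive _ _ (M * exp (M * x))). auto_derive; [auto|ring].
Qed.

Lemma continuous_picard n k x : continuous (fun t => picard n t k) x.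
Proof.
  revert k x. induction n as [|n IHn]; intros [|k] x; simpl.
  1, 3: apply continuous_exp_boundary.
  - apply continuous_const.
  - apply continuous_Rplus; [apply continuous_const|].
    apply continuous_RInt_0. intros y. apply continuous_shifted; [lia|].
    intros j z. apply (continuous_comp_clamp (fun t => picard n t j)); auto.
Qed.

Lemma continuous_shifted_picard n k x : (1 <= k)%nat ->
  continuous (fun t => shifted (picard n) (clamp T t) k) x.
Proof.
  intros Hk. apply continuous_shifted; [exact Hk|]. intros j z.
  apply (continuous_comp_clamp (fun t => picard n t j)); auto using continuous_picard.
Qed.

Lemma picard_bounds n k t : 0 <= t <= T -> 0 <= picard n t k <= eta * exp (M * t).
Proof.
  assert (Hexp : forall t, 0 <= t -> 1 <= exp (M * t)) by (intros; apply exp_ge_1; nra).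
  revert k t. induction n as [|n IHn]; intros [|k] t Ht; simpl.
  1, 3: pose proof (Hp_bd t); pose proof (exp_pos (M * t)); split; nra.
  - pose proof (Hs0 (S k) ltac:(lia)). pose proof (Hexp t ltac:(lra)). nra.
  - set (F := fun x => shifted (picard n) (clamp T x) (S k)).
    assert (HF : ex_RInt F 0 t).
    { apply ex_RInt_of_continuous. intros y. apply continuous_shifted_picard. lia. }
    assert (HFb : forall x, 0 < x < t -> 0 <= F x <= eta * M * exp (M * x)).
    { intros x Hx. unfold F. rewrite clamp_id by lra.
      rewrite (Rmult_comm eta), Rmult_assoc.
      apply shifted_bounds; [lia|]. intros j. apply IHn. lra. }
    pose proof (Hs0 (S k) ltac:(lia)).
    split.
    + assert (0 <= RInt F 0 t) by (apply RInt_ge_0; auto; [lra|intros x Hx; apply HFb, Hx]).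
      lra.
    + assert (RInt F 0 t <= RInt (fun x => eta * M * exp (M * x)) 0 t).
      { apply RInt_le; auto; [lra| |intros x Hx; apply HFb, Hx].
        apply ex_RInt_of_continuous. intros y.
        apply (continuous_of_is_derive _ _ (eta * M * (M * exp (M * y)))).
        auto_derive; [auto|ring]. }
      rewrite RInt_scaled_exp in H0. lra.
Qed.

Lemma picard_step n k t : 0 <= t <= T ->
  Rabs (picard (S n) t k - picard n t k) <= eta * exp (M * T) * (/2) ^ n * exp (rate * t).
Proof.
  assert (Hrate : 0 <= rate) by (unfold rate; lra).
  assert (HC : 0 <= eta * exp (M * T)) by (pose proof (exp_pos (M * T)); nra).
  revert k t. induction n as [|n IHn]; intros k t Ht.
  - pose proof (picard_bounds 1 k t Ht). pose proof (picard_bounds 0 k t Ht).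
    assert (eta * exp (M * t) <= eta * exp (M * T))
      by (apply Rmult_le_compat_l; [exact Heta|apply exp_le; nra]).
    assert (1 <= exp (rate * t)) by (apply exp_ge_1; nra).
    simpl pow. rewrite Rmult_1_r. apply Rabs_le_between. split; nra.
  - destruct k as [|k].
    { pose proof (pow_lt (/2) (S n) ltac:(lra)). pose proof (exp_pos (rate * t)).
      cbn [picard]. rewrite Rminus_diag, Rabs_R0. apply Rmult_le_pos; [|lra]. nra. }
    set (F := fun m x => shifted (picard m) (clamp T x) (S k)).
    assert (HF : forall m x, continuous (F m) x).
    { intros m x. apply continuous_shifted_picard. lia. }
    apply (halving_step (fun t => picard (S (S n)) t (S k) - picard (S n) t (S k))
             (fun x => F (S n) x - F n x)); [exact HC| | | |exact Ht].
    + intros x. apply continuous_Rminus; apply continuous_picard.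
    + simpl. rewrite !RInt_point. apply Rminus_diag.
    + intros x Hx. split.
      * apply (is_derive_minus (fun t => picard (S (S n)) t (S k)) (fun t => picard (S n) t (S k)));
          [exact (is_derive_plus_RInt_0 (s0 (S k)) (F (S n)) x (HF (S n)))
          |exact (is_derive_plus_RInt_0 (s0 (S k)) (F n) x (HF n))].
      * unfold F. rewrite clamp_id by lra. apply shifted_lipschitz; [lia|].
        intros j. apply IHn. lra.
Qed.

Let Cpic := eta * exp (M * T) * exp (rate * T).

Lemma Cpic_nonneg : 0 <= Cpic.
Proof.
  unfold Cpic. pose proof (exp_pos (M * T)). pose proof (exp_pos (rate * T)).
  apply Rmult_le_pos; [apply Rmult_le_pos|]; lra.
Qed.

Lemma picard_step_uniform n k t : 0 <= t <= T ->
  Rabs (picard (S n) t k - picard n t k) <= Cpic * (/2) ^ n.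
Proof.
  intros Ht. eapply Rle_trans; [now apply picard_step|].
  assert (exp (rate * t) <= exp (rate * T)) by (apply exp_le; unfold rate; nra).
  assert (0 <= eta * exp (M * T) * (/2) ^ n).
  { pose proof (exp_pos (M * T)). pose proof (pow_lt (/2) n ltac:(lra)).
    apply Rmult_le_pos; [apply Rmult_le_pos|]; lra. }
  unfold Cpic. replace (eta * exp (M * T) * exp (rate * T) * (/2) ^ n)
    with (eta * exp (M * T) * (/2) ^ n * exp (rate * T)) by ring.
  now apply Rmult_le_compat_l.
Qed.

Definition picard_lim (t : R) (k : nat) : R := real (Lim_seq (fun n => picard n t k)).

Lemma picard_lim_is_lim k t : 0 <= t <= T -> is_lim_seq (fun n => picard n t k) (picard_lim t k).
Proof. intros Ht. apply (halving_is_lim _ Cpic). intros n. now apply picard_step_uniform. Qed.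

Lemma picard_lim_near n k t : 0 <= t <= T ->
  Rabs (picard_lim t k - picard n t k) <= 2 * Cpic * (/2) ^ n.
Proof.
  intros Ht. apply (halving_lim_near (fun n => picard n t k)).
  intros m. now apply picard_step_uniform.
Qed.

Lemma picard_lim_bounds k t : 0 <= t <= T -> 0 <= picard_lim t k <= eta * exp (M * t).
Proof.
  intros Ht. pose proof (picard_lim_is_lim k t Ht) as Hl.
  pose proof (is_lim_seq_le (fun _ => 0) _ 0 _ (fun n => proj1 (picard_bounds n k t Ht))
    (is_lim_seq_const 0) Hl).
  pose proof (is_lim_seq_le _ (fun _ => eta * exp (M * t)) _ (eta * exp (M * t))
    (fun n => proj2 (picard_bounds n k t Ht)) Hl (is_lim_seq_const _)).
  simpl in *. lra.
Qed.

Lemma continuous_picard_lim k x : continuous (fun t => picard_lim (clamp T t) k) x.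
Proof.
  apply (continuous_halving_limit (fun n t => picard n (clamp T t) k) _ (2 * Cpic));
    [pose proof Cpic_nonneg; lra| |].
  - intros n y. apply picard_lim_near, clamp_in, HT.
  - intros n. apply (continuous_comp_clamp (fun t => picard n t k)); auto using continuous_picard.
Qed.

Definition picard_rhs (k : nat) (x : R) : R := shifted picard_lim (clamp T x) k.

Lemma continuous_picard_rhs k x : (1 <= k)%nat -> continuous (picard_rhs k) x.
Proof.
  intros Hk. apply continuous_shifted; [exact Hk|]. intros j y. apply continuous_picard_lim.
Qed.

Lemma picard_lim_integral k t : (1 <= k)%nat -> 0 <= t <= T ->
  picard_lim t k = s0 k + RInt (picard_rhs k) 0 t.
Proof.
  intros Hk Ht. pose proof Cpic_nonneg as HC.
  apply Rminus_diag_uniq, (eq0_of_abs_le_halving _ (Cpic + 8 * T * M * Cpic));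
    [assert (0 <= T * M) by nra; nra|].
  intros n. set (Fn := fun x => shifted (picard n) (clamp T x) k).
  assert (HFn : forall x, continuous Fn x).
  { intros x. now apply continuous_shifted_picard. }
  assert (Hpic : picard (S n) t k = s0 k + RInt Fn 0 t) by (destruct k; [lia|reflexivity]).
  assert (Hint : Rabs (RInt (fun x => Fn x - picard_rhs k x) 0 t)
                 <= (t - 0) * (4 * M * (2 * Cpic * (/2) ^ n))).
  { apply abs_RInt_le_const; [lra| |].
    - apply ex_RInt_of_continuous. intros x.
      apply continuous_Rminus; [apply HFn|now apply continuous_picard_rhs].
    - intros x Hx. unfold Fn, picard_rhs. rewrite Rabs_minus_sym.
      apply shifted_lipschitz; [exact Hk|]. intros j. apply picard_lim_near, clamp_in, HT. }
  rewrite (RInt_minus (V:=R_CompleteNormedModule)) in Hint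
    by (apply ex_RInt_of_continuous; auto using continuous_picard_rhs).
  pose proof (picard_lim_near (S n) k t Ht) as Hnear. rewrite Hpic in Hnear.
  assert (HMQ : 0 <= M * (Cpic * (/2) ^ n)).
  { pose proof (pow_lt (/2) n ltac:(lra)). apply Rmult_le_pos; [lra|]. apply Rmult_le_pos; lra. }
  assert (t * (M * (Cpic * (/2) ^ n)) <= T * (M * (Cpic * (/2) ^ n)))
    by (apply Rmult_le_compat_r; lra).
  pose proof (Rabs_triang (picard_lim t k - (s0 k + RInt Fn 0 t))
                          (minus (RInt Fn 0 t) (RInt (picard_rhs k) 0 t))) as Htri.
  unfold minus, plus, opp in Hint, Htri. simpl in Hint, Htri. simpl pow in Hnear.
  replace (picard_lim t k - (s0 k + RInt Fn 0 t) + (RInt Fn 0 t + - RInt (picard_rhs k) 0 t))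
    with (picard_lim t k - (s0 k + RInt (picard_rhs k) 0 t)) in Htri by ring.
  lra.
Qed.

(* Equal to [exp (- M t) * picard_lim t k] on [0, T] (see [picard_lim_solution]), but
   written through the integral equation so that it is differentiable on the whole line. *)
Definition solution (t : R) (k : nat) : R :=
  match k with
  | O => p t
  | S _ => exp (- M * t) * (s0 k + RInt (picard_rhs k) 0 t)
  end.

Lemma exp_opp_mul_exp t : exp (- M * t) * exp (M * t) = 1.
Proof. rewrite <- exp_plus, <- exp_0. f_equal. ring. Qed.

Lemma picard_lim_solution t k : 0 <= t <= T -> picard_lim t k = exp (M * t) * solution t k.
Proof.
  intros Ht. destruct k as [|k].
  - unfold picard_lim. rewrite (Lim_seq_ext _ (fun _ => exp (M * t) * p t)) by now intros [|n].
    now rewrite Lim_seq_const.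
  - rewrite picard_lim_integral by (lia || exact Ht). simpl.
    rewrite <- Rmult_assoc, (Rmult_comm (exp _)), exp_opp_mul_exp. ring.
Qed.

Lemma solution_derive k t : (1 <= k)%nat ->
  is_derive (fun x => solution x k) t (- M * solution t k + exp (- M * t) * picard_rhs k t).
Proof.
  intros Hk. destruct k as [|k]; [lia|]. simpl.
  replace (- M * (exp (- M * t) * (s0 (S k) + RInt (picard_rhs (S k)) 0 t))
           + exp (- M * t) * picard_rhs (S k) t)
    with (- M * exp (- M * t) * (s0 (S k) + RInt (picard_rhs (S k)) 0 t)
          + exp (- M * t) * picard_rhs (S k) t) by ring.
  apply (is_derive_mult (fun x => exp (- M * x))
           (fun x => s0 (S k) + RInt (picard_rhs (S k)) 0 x)).
  - auto_derive; [auto|ring].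
  - apply is_derive_plus_RInt_0. intros x. apply continuous_picard_rhs. lia.
  - intros; apply Rmult_comm.
Qed.

Lemma solution_is_derive k t : (1 <= k)%nat -> 0 <= t <= T ->
  is_derive (fun x => solution x k) t (sysop solution t k).
Proof.
  intros Hk Ht.
  assert (Hrhs : picard_rhs k t = exp (M * t) * (sysop solution t k + M * solution t k)).
  { unfold picard_rhs, shifted, sysop. rewrite clamp_id by exact Ht.
    rewrite !picard_lim_solution by exact Ht. ring. }
  pose proof (solution_derive k t Hk) as Hder.
  rewrite Hrhs, <- Rmult_assoc, exp_opp_mul_exp in Hder.
  now replace (- M * solution t k + 1 * (sysop solution t k + M * solution t k))
    with (sysop solution t k) in Hder by ring.
Qed.

Lemma solution_bounds k t : 0 <= t <= T -> 0 <= solution t k <= eta.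
Proof.
  intros Ht. destruct k as [|k]; [apply Hp_bd|].
  pose proof (picard_lim_bounds (S k) t Ht) as Hb. rewrite picard_lim_solution in Hb by exact Ht.
  pose proof (exp_pos (M * t)). split; nra.
Qed.

Lemma system_exists : exists s : R -> nat -> R,
  (forall t, s t 0%nat = p t) /\
  (forall k, (1 <= k)%nat -> s 0 k = s0 k) /\
  (forall k t, (1 <= k)%nat -> 0 <= t <= T -> is_derive (fun x => s x k) t (sysop s t k)) /\
  (forall k x, (1 <= k)%nat -> continuous (fun t => s t k) x) /\
  (forall t k, 0 <= t <= T -> 0 <= s t k <= eta).
Proof.
  exists solution. split; [reflexivity|]. split; [|split; [|split]].
  - intros [|k] Hk; [lia|]. simpl. rewrite RInt_point, Rmult_0_r, exp_0.
    change (1 * (s0 (S k) + 0) = s0 (S k)). ring.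
  - exact solution_is_derive.
  - intros k x Hk. eapply continuous_of_is_derive. now apply solution_derive.
  - intros t k. apply solution_bounds.
Qed.

End LinearSystem.

(** * The linearized problem *)

Section Linearized.
Variables (h B lam T eta C0 phimin : R) (psi : R -> R) (s0 c0 : nat -> R) (f : R -> nat -> R).
Hypothesis Hh : 0 < h.
Hypothesis HB : B = -1 \/ B = 1.
Hypothesis Hlam : 0 < lam.
Hypothesis HT : 0 <= T.
Hypothesis Heta : 0 <= eta.
Hypothesis Hc0 : forall k, 0 <= c0 k <= C0.
Hypothesis Hphimin : 0 < phimin.
Hypothesis Hphi : forall c, 0 <= c <= C0 -> phimin <= phi 1 B c.
Hypothesis HB1 : B = 1 -> eta <= 1.
Hypothesis Hf_bd : forall t k, 0 <= t <= T -> 0 <= f t k <= eta.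
Hypothesis Hf_cont : forall k x, continuous (fun t => f (clamp T t) k) x.

Definition gcl (k : nat) (t : R) : R := gco 1 B lam c0 f (clamp T t) k.

Definition exposure (k : nat) (t : R) : R := RInt (fun x => f (clamp T x) k) 0 (clamp T t).

Lemma gcl_formula k t :
  gcl k t = c0 k / (phi 1 B (c0 k) * exp (lam * exposure k t) - B * c0 k).
Proof.
  unfold gcl, gco, exposure. rewrite Rmult_1_l, Rmult_1_r.
  rewrite (RInt_ext (fun tau => f tau k) (fun x => f (clamp T x) k)); [reflexivity|].
  intros x Hx.
  pose proof (clamp_in T t HT). rewrite Rmin_left, Rmax_right in Hx by lra.
  rewrite clamp_id by lra. reflexivity.
Qed.

Lemma exposure_nonneg k t : 0 <= exposure k t.
Proof.
  pose proof (clamp_in T t HT). apply RInt_ge_0; [lra|now apply ex_RInt_of_continuous|].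
  intros x _. apply Hf_bd, clamp_in, HT.
Qed.

Lemma gcl_denominator_ge_1 k t : 1 <= phi 1 B (c0 k) * exp (lam * exposure k t) - B * c0 k.
Proof.
  assert (1 <= exp (lam * exposure k t))
    by (apply exp_ge_1, Rmult_le_pos; [lra|apply exposure_nonneg]).
  pose proof (Hphi (c0 k) (Hc0 k)). unfold phi in *. nra.
Qed.

Lemma gcl_bounds k t : 0 <= gcl k t <= c0 k.
Proof.
  rewrite gcl_formula. pose proof (gcl_denominator_ge_1 k t). pose proof (Hc0 k).
  set (D := phi 1 B (c0 k) * exp (lam * exposure k t) - B * c0 k) in *.
  split; [apply Rdiv_le_0_compat; lra|].
  apply (Rmult_le_reg_r D); [lra|]. unfold Rdiv. rewrite Rmult_assoc, Rinv_l, Rmult_1_r by lra.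
  nra.
Qed.

Lemma gcl_le_opp_phi k t : B = -1 -> gcl k t <= 1 - phimin.
Proof.
  intros HBm. pose proof (gcl_bounds k t). pose proof (Hphi (c0 k) (Hc0 k)).
  unfold phi in *. rewrite HBm in *. lra.
Qed.

Lemma one_plus_B_gcl_ge k t : Rmin 1 phimin <= 1 + B * gcl k t.
Proof.
  pose proof (gcl_bounds k t). pose proof (Rmin_l 1 phimin). pose proof (Rmin_r 1 phimin).
  destruct HB as [HBm | HBm]; [pose proof (gcl_le_opp_phi k t HBm)|]; rewrite HBm; lra.
Qed.

Lemma one_plus_B_gcl_pos k t : 0 < 1 + B * gcl k t.
Proof.
  pose proof (one_plus_B_gcl_ge k t). pose proof (Rmin_pos 1 phimin ltac:(lra) Hphimin). lra.
Qed.

Lemma continuous_gcl k x : continuous (gcl k) x.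
Proof.
  apply (continuous_ext (fun t => c0 k / (phi 1 B (c0 k) * exp (lam * exposure k t) - B * c0 k)));
    [intros; symmetry; apply gcl_formula|].
  pose proof (gcl_denominator_ge_1 k x).
  apply continuous_Rmult; [apply continuous_const|].
  apply continuous_Rinv_comp; [|lra].
  apply continuous_Rminus; [|apply continuous_const].
  apply continuous_Rmult; [apply continuous_const|].
  apply continuous_exp_comp, continuous_Rmult; [apply continuous_const|].
  apply (continuous_comp_clamp (fun t => RInt (fun x => f (clamp T x) k) 0 t)); [exact HT|].
  intros y. now apply continuous_RInt_0.
Qed.

(* Collecting the terms of [rhs] at the nodes [k+1], [k-1] and [k]. *)
Definition stencil (k j : nat) (t : R) : R :=
  (2 + B * gcl k t + B * gcl j t) / (2 * (1 + B * gcl k t) * h ^ 2).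
Definition acoef (k : nat) (t : R) : R := stencil k (S k) t.
Definition ccoef (k : nat) (t : R) : R := stencil k (pred k) t.
Definition reaction (k : nat) (t : R) : R := lam * gcl k t * (B * f (clamp T t) k - 1).
Definition dcoef (k : nat) (t : R) : R := - acoef k t - ccoef k t + reaction k t.

Lemma rhs_sysop s t k : 0 <= t <= T ->
  rhs h 1 B lam c0 f s t k = sysop acoef ccoef dcoef s t k.
Proof.
  intros Ht. pose proof (one_plus_B_gcl_pos k t) as Hpos.
  unfold rhs, sysop, dcoef, acoef, ccoef, reaction, stencil, Lap, Dp, Dm, bco, gammaco.
  unfold gcl in *. rewrite !clamp_id in * by exact Ht.
  field. split; lra.
Qed.

Let Mh := (1 + C0) / (Rmin 1 phimin * h ^ 2).

Lemma stencil_bounds k j t : 0 <= stencil k j t <= Mh.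
Proof.
  pose proof (one_plus_B_gcl_ge k t). pose proof (gcl_bounds k t). pose proof (gcl_bounds j t).
  set (m := Rmin 1 phimin) in *. assert (Hm : 0 < m) by (apply Rmin_pos; lra).
  pose proof (Hc0 k). pose proof (Hc0 j).
  assert (HN : 0 <= 2 + B * gcl k t + B * gcl j t <= 2 + 2 * C0).
  { destruct HB as [HBm | HBm]; rewrite HBm; [|lra].
    pose proof (gcl_le_opp_phi k t HBm). pose proof (gcl_le_opp_phi j t HBm). lra. }
  assert (Hh2 : 0 < h ^ 2) by (apply pow_lt, Hh).
  assert (Hinv : / (2 * (1 + B * gcl k t) * h ^ 2) <= / (2 * m * h ^ 2))
    by (apply Rinv_le_contravar; nra).
  assert (Hinv0 : 0 < / (2 * (1 + B * gcl k t) * h ^ 2)) by (apply Rinv_0_lt_compat; nra).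
  replace Mh with ((2 + 2 * C0) * / (2 * m * h ^ 2)) by (unfold Mh; fold m; field; split; lra).
  unfold stencil, Rdiv. split; [nra|]. apply Rmult_le_compat; lra.
Qed.

Lemma reaction_bounds k t : - (lam * C0 * (eta + 1)) <= reaction k t <= 0.
Proof.
  pose proof (gcl_bounds k t). pose proof (Hc0 k).
  pose proof (Hf_bd (clamp T t) k (clamp_in T t HT)).
  assert (Hf1 : - (eta + 1) <= B * f (clamp T t) k - 1 <= 0).
  { destruct HB as [-> | ->]; [|specialize (HB1 eq_refl)]; lra. }
  assert (0 <= lam * gcl k t <= lam * C0) by (split; nra).
  unfold reaction. split; nra.
Qed.

Lemma continuous_stencil k j x : continuous (stencil k j) x.
Proof.
  pose proof (one_plus_B_gcl_pos k x). pose proof (pow_lt h 2 Hh).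
  apply continuous_Rmult.
  - repeat apply continuous_Rplus; try apply continuous_const;
      apply continuous_Rmult; auto using continuous_const, continuous_gcl.
  - apply continuous_Rinv_comp; [|nra].
    repeat apply continuous_Rmult; auto using continuous_const.
    apply continuous_Rplus; [apply continuous_const|].
    apply continuous_Rmult; auto using continuous_const, continuous_gcl.
Qed.

Lemma continuous_reaction k x : continuous (reaction k) x.
Proof.
  apply continuous_Rmult; [apply continuous_Rmult; auto using continuous_const, continuous_gcl|].
  apply continuous_Rminus; [|apply continuous_const].
  apply continuous_Rmult; auto using continuous_const.
Qed.

Let M0 := 2 * Mh + lam * C0 * (eta + 1).

Lemma M0_nonneg : 0 <= M0.
Proof.
  pose proof (stencil_bounds 0 0 0). pose proof (reaction_bounds 0 0). unfold M0. lra.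
Qed.

Lemma stencil_le_M0 k j t : 0 <= stencil k j t <= M0.
Proof.
  pose proof (stencil_bounds k j t). pose proof (reaction_bounds k t). unfold M0. lra.
Qed.

Lemma dcoef_bounds k t : Rabs (dcoef k t) <= M0.
Proof.
  pose proof (stencil_bounds k (S k) t). pose proof (stencil_bounds k (pred k) t).
  pose proof (reaction_bounds k t). unfold dcoef, acoef, ccoef, M0.
  apply Rabs_le_between. lra.
Qed.

Lemma coef_sum_nonpos k t : acoef k t + ccoef k t + dcoef k t <= 0.
Proof. pose proof (reaction_bounds k t). unfold dcoef. lra. Qed.

Lemma continuous_coefs k t :
  continuous (acoef k) t /\ continuous (ccoef k) t /\ continuous (dcoef k) t.
Proof.
  split; [apply continuous_stencil|split; [apply continuous_stencil|]].
  apply continuous_Rplus; [apply continuous_Rminus|apply continuous_reaction].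
  - apply (continuous_ext (fun y => - acoef k y)); [reflexivity|].
    apply (continuous_opp (acoef k)), continuous_stencil.
  - apply continuous_stencil.
Qed.

Hypothesis Hpsi_cont : forall x, continuous (fun t => psi (clamp T t)) x.
Hypothesis Hpsi_bd : forall t, 0 <= t <= T -> 0 <= psi t <= eta.
Hypothesis Hs0 : forall k, 0 <= s0 k <= eta.

Lemma linearized_exists : exists s : R -> nat -> R,
  is_solution h T 1 B lam psi s0 c0 f s /\ (forall t k, 0 <= t <= T -> 0 <= s t k <= eta).
Proof.
  destruct (system_exists T eta M0 acoef ccoef dcoef (fun t => psi (clamp T t)) s0 HT M0_nonneg
              (fun k t _ => stencil_le_M0 k (S k) t) (fun k t _ => stencil_le_M0 k (pred k) t)
              (fun k t _ => dcoef_bounds k t) Heta (fun k t _ => coef_sum_nonpos k t)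
              (fun k t _ => continuous_coefs k t) Hpsi_cont
              (fun t => Hpsi_bd _ (clamp_in T t HT)) (fun k _ => Hs0 k))
    as [s (Hbnd & Hinit & Hder & Hcont & Hbd)].
  exists s. split; [|exact Hbd].
  split; [|split; [|split; [|split]]].
  - intros k Hk t0 _ eps Heps.
    destruct (continuous_eps_delta _ t0 (Hcont k t0 Hk) eps Heps) as [del [Hdel Hy]].
    exists del. split; [exact Hdel|]. intros t _. apply Hy.
  - intros k Hk t Ht. rewrite rhs_sysop by lra. apply Hder; [exact Hk|lra].
  - intros k Hk. apply left_deriv_of_is_derive.
    rewrite rhs_sysop by lra. apply Hder; [exact Hk|lra].
  - exact Hinit.
  - intros t Ht. now rewrite Hbnd, clamp_id.
Qed.

Lemma continuous_clamp_of_is_solution s k x : is_solution h T 1 B lam psi s0 c0 f s ->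
  (1 <= k)%nat -> continuous (fun t => s (clamp T t) k) x.
Proof.
  intros [Hc _] Hk. apply continuous_of_eps_delta. intros e He.
  destruct (Hc k Hk (clamp T x) (clamp_in T x HT) e He) as [del [Hdel Hy]].
  exists del. split; [exact Hdel|]. intros y Hyx. apply Hy; [apply clamp_in, HT|].
  eapply Rle_lt_trans; [apply clamp_lipschitz, HT|exact Hyx].
Qed.

Lemma linearized_unique s1 s2 :
  is_solution h T 1 B lam psi s0 c0 f s1 -> is_solution h T 1 B lam psi s0 c0 f s2 ->
  bounded_on T s1 -> bounded_on T s2 -> forall t k, 0 <= t <= T -> s1 t k = s2 t k.
Proof.
  intros Hs1 Hs2 [B1 HB1'] [B2 HB2'] t k Ht. apply Rminus_diag_uniq.
  pose proof Hs1 as (_ & Hd1 & _ & Hi1 & Hb1). pose proof Hs2 as (_ & Hd2 & _ & Hi2 & Hb2).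
  apply (system_unique T M0 acoef ccoef dcoef HT M0_nonneg
           (fun k t _ => stencil_le_M0 k (S k) t) (fun k t _ => stencil_le_M0 k (pred k) t)
           (fun k t _ => dcoef_bounds k t) (fun t k => s1 t k - s2 t k)); [| | | | |exact Ht].
  - intros t' Ht'. rewrite Hb1, Hb2 by exact Ht'. ring.
  - intros k' Hk'. rewrite Hi1, Hi2 by exact Hk'. ring.
  - intros k' t' Hk' Ht'.
    replace (sysop acoef ccoef dcoef (fun t k => s1 t k - s2 t k) t' k')
      with (sysop acoef ccoef dcoef s1 t' k' - sysop acoef ccoef dcoef s2 t' k')
      by (unfold sysop; ring).
    rewrite <- !rhs_sysop by lra.
    apply (is_derive_minus (fun x => s1 x k') (fun x => s2 x k')); auto.
  - intros k' x Hk'.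
    apply continuous_Rminus; apply continuous_clamp_of_is_solution; assumption.
  - exists (B1 + B2). intros t' k' Ht'. cbv beta.
    pose proof (HB1' t' k' Ht'). pose proof (HB2' t' k' Ht').
    pose proof (Rabs_triang (s1 t' k') (- s2 t' k')). rewrite Rabs_Ropp in *. unfold Rminus. lra.
Qed.

End Linearized.

Lemma condF_continuous_entries h T eta beta psi K (f : R -> nat -> R) :
  0 < h -> 0 <= T -> 0 < beta -> holder T beta psi -> condF h T eta psi K f ->
  forall k x, continuous (fun t => f (clamp T t) k) x.
Proof.
  intros Hh HT Hbeta Hhol (_ & HL2 & _ & _ & _ & _ & Hf0 & _) [|k] x.
  - apply (continuous_ext (fun t => psi (clamp T t)));
      [|now apply (holder_continuous_clamp T beta)].
    intros t. symmetry. apply Hf0, clamp_in, HT.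
  - apply (contL2_continuous_entry h); [exact Hh|exact HT|exact HL2|lia].
Qed.

Theorem mainTheorem7
  (h A B lam T eta beta K cm C0 phimin phimax : R)
  (psi : R -> R) (s0 c0 : nat -> R) (f : R -> nat -> R)
  (hh : 0 < h) (hA : A = 1) (hB : B = -1 \/ B = 1)
  (hlam : 0 < lam) (hT : 0 < T) (heta : 0 < eta)
  (hbeta : 1/4 < beta < 1/2) (hpsi_hol : holder T beta psi)
  (hpsi_bd : forall t, 0 <= t <= T -> 0 <= psi t <= eta) (hpsi0 : psi 0 = 0)
  (hs0_bd : forall k, 0 <= s0 k <= eta) (hs00 : s0 0%nat = 0)
  (hs0_L2 : inL2 s0) (hDs0_L2 : inL2 (Dp h s0))
  (hcm : 0 < cm) (hc0_bd : forall k, cm <= c0 k <= C0)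
  (hc0_L2 : inL2 (fun k => C0 - c0 k)) (hDc0_L2 : inL2 (Dp h c0))
  (hphimin : 0 < phimin) (hphi_le : phimin <= phimax)
  (hphi : forall c, 0 <= c <= C0 -> phimin <= phi A B c <= phimax)
  (hB1 : B = 1 -> eta < 1)
  (hF : condF h T eta psi K f) :
  exists s : R -> nat -> R,
    is_solution h T A B lam psi s0 c0 f s /\ bounded_on T s /\
    (forall s' : R -> nat -> R,
       is_solution h T A B lam psi s0 c0 f s' -> bounded_on T s' ->
       forall t k, 0 <= t <= T -> s' t k = s t k) /\
    (forall t k, 0 <= t <= T -> (1 <= k)%nat -> 0 <= s t k <= eta).
Proof.
  subst A.
  assert (HT : 0 <= T) by lra.
  assert (Hbeta : 0 < beta) by lra.
  assert (Hc0 : forall k, 0 <= c0 k <= C0) by (intros k; specialize (hc0_bd k); lra).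
  assert (Hphi : forall c, 0 <= c <= C0 -> phimin <= phi 1 B c) by (intros c Hc; apply hphi, Hc).
  assert (HB1 : B = 1 -> eta <= 1) by (intros HB; specialize (hB1 HB); lra).
  pose proof (condF_continuous_entries h T eta beta psi K f hh HT Hbeta hpsi_hol hF) as Hf_cont.
  pose proof (holder_continuous_clamp T beta psi HT Hbeta hpsi_hol) as Hpsi_cont.
  destruct hF as (_ & _ & _ & _ & _ & _ & _ & Hf_bd).
  destruct (linearized_exists h B lam T eta C0 phimin psi s0 c0 f hh hB hlam HT ltac:(lra) Hc0
              hphimin Hphi HB1 Hf_bd Hf_cont Hpsi_cont hpsi_bd hs0_bd) as [s [Hs Hbd]].
  assert (Hsb : bounded_on T s).
  { exists eta. intros t k Ht. specialize (Hbd t k Ht). rewrite Rabs_right; lra. }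
  exists s. split; [exact Hs|]. split; [exact Hsb|]. split.
  - intros s' Hs' Hs'b.
    exact (linearized_unique h B lam T eta C0 phimin psi s0 c0 f hh hB hlam HT Hc0 hphimin Hphi HB1
             Hf_bd Hf_cont s' s Hs' Hs Hs'b Hsb).
  - intros t k Ht _. exact (Hbd t k Ht).
Qed.
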